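(* For every round $\ell\ge\lceil n/2\rceil$ of Algorithm 2 in which a tentative edge $e^{(\ell)}$ exists, the probability that $e^{(\ell)}$ is feasible, i.e. that the set of edges accepted before round $\ell$ together with $e^{(\ell)}$ is a matching, conditioned on $L^{\le\ell}$ and on $T^{\ge\ell+1}$, is at least $\frac{n/2-1}{\ell-1}$.
   Context: Submodular secretary matching setting. Let $G=(L\cup R,E)$ be a bipartite graph with $|L|=n$, and $v\colon 2^E\to\mathbb{R}_{\ge0}$ monotone and submodular. The vertices of $L$ arrive one per round in uniformly random order; on arrival of $u\in L$ its incident edges are revealed; $L^{\le\ell}$ denotes the set of vertices of $L$ arriving in rounds $1,\dots,\ell$. $\mathcal{A}$ is an offline algorithm that for every $L'\subseteq L$ returns a matching $\mathcal{A}(L'\cup R)$ of the subgraph induced by $L'\cup R$, depending only on the set $L'$. Algorithm 2: it rejects the vertices arriving in rounds $1,\dots,\lceil n/2\rceil-1$; in each round $\ell\ge\lceil n/2\rceil$ with arriving vertex $u$, it computes $M^{(\ell)}=\mathcal{A}(L^{\le\ell}\cup R)$, lets $e^{(\ell)}$ be the edge incident to $u$ in $M^{(\ell)}$ (the tentative edge; none if $u$ is unmatched), and if $e^{(\ell)}$ exists and the set of accepted edges together with $e^{(\ell)}$ is a matching, accepts $e^{(\ell)}$. $T^{\ge\ell}$ is the set of tentative edges of rounds $\ell,\dots,n$. *)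

From HB Require Import structures.
From mathcomp Require Import all_boot all_order all_algebra all_fingroup.
Set Implicit Arguments. Unset Strict Implicit. Unset Printing Implicit Defensive.

(* Vertices of L are 'I_n; R is a finite type; edges are pairs (u, r).
   A random arrival order is a permutation pi : {perm 'I_n}; the vertex
   arriving in round k+1 (paper's 1-indexed round) is pi k, for k : 'I_n. *)

Section Alg.
Variables (n : nat) (R : finType).
Variable A : {set 'I_n} -> {set 'I_n * R}.

Definition is_matching (M : {set 'I_n * R}) : bool :=
  [forall e in M, forall f in M, ((e.1 == f.1) || (e.2 == f.2)) ==> (e == f)].

(* L^{<= j}: vertices arriving in rounds 1..j. *)
Definition arrived (pi : {perm 'I_n}) (j : nat) : {set 'I_n} :=
  [set pi i | i : 'I_n & (i < j)%N].

(* Tentative edge of (1-indexed) round k+1: the edge of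
   M^{(k+1)} = A(L^{<= k+1}) incident to the vertex arriving in round k+1. *)
Definition tent (pi : {perm 'I_n}) (k : nat) : option ('I_n * R) :=
  [pick e in A (arrived pi k.+1) | e.1 \in [set pi i | i : 'I_n & val i == k]].

Fixpoint accepted (pi : {perm 'I_n}) (k : nat) : {set 'I_n * R} :=
  match k with
  | 0 => set0
  | k'.+1 =>
      let a := accepted pi k' in
      if (uphalf n <= k'.+1)%N then
        match tent pi k' with
        | Some e => if is_matching (e |: a) then e |: a else a
        | None => a
        end
      else a
  end.

(* T^{>= l+1} where round l has 0-based index i (l = i+1): tentative
   edges of rounds l+1..n, i.e. 0-based indices j with i < j < n. *)
Definition tent_after (pi : {perm 'I_n}) (i : nat) : {set 'I_n * R} :=
  [set e | [exists j : 'I_n, (i < j)%N && (tent pi j == Some e)]].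

(* e^{(l)} (0-based index i) exists and is feasible w.r.t. edges accepted
   before round l (i.e. in rounds 1..l-1 = 1..i). *)
Definition feasible (pi : {perm 'I_n}) (i : nat) : bool :=
  if tent pi i is Some e then is_matching (e |: accepted pi i) else false.

End Alg.

From mathcomp Require Import all_boot all_order all_algebra all_fingroup.
From mathcomp Require Import zify.
Import Order.TTheory GRing.Theory Num.Theory.
Set Implicit Arguments. Unset Strict Implicit.

(* Reordering the first l arrivals, i.e. multiplying the arrival order on the
   left by a permutation of the first l positions, changes neither L^{<=l} nor
   T^{>=l+1}, so it suffices to bound the fraction of feasible orders on each
   such orbit.  On an orbit the tentative edge of round l is (pi l, r) for some
   r fixed by the vertex arriving last, and it is feasible as soon as no
   tentative edge of rounds ceil(n/2), ..., l-1 ends at r.  Going backwards,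
   the vertex arriving in round m+1 is uniform in L^{<=m+1}, and as
   A(L^{<=m+1}) is a matching at most one of these m+1 choices sends its
   tentative edge to r.  Hence r stays free with probability at least
   prod_m m/(m+1) = (ceil(n/2) - 1)/(l - 1). *)

Lemma sum_nat_of_bool (T : finType) (X : {set T}) (b : pred T) :
  \sum_(x in X) b x = #|[set x in X | b x]|.
Proof.
rewrite -sum1_card big_mkcond [RHS]big_mkcond /=; apply: eq_bigr => x _.
by rewrite !inE; case: (x \in X); case: (b x).
Qed.

Section Matching.
Variables (n : nat) (R : finType).

Lemma is_matchingP (M : {set 'I_n * R}) :
  reflect {in M &, forall e f, (e.1 == f.1) || (e.2 == f.2) -> e = f}
          (is_matching M).
Proof.
apply: (iffP forall_inP) => [H e f eM fM ef|H e eM].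
  by have /forall_inP/(_ f fM)/implyP/(_ ef)/eqP := H e eM.
by apply/forall_inP => f fM; apply/implyP => ef; apply/eqP; apply: H.
Qed.

Lemma is_matching_setU1 (M : {set 'I_n * R}) e :
  is_matching M -> {in M, forall f, (e.1 != f.1) && (e.2 != f.2)} ->
  is_matching (e |: M).
Proof.
move=> /is_matchingP matchM disj; apply/is_matchingP => a b.
rewrite !in_setU1 => /orP [/eqP -> | aM] /orP [/eqP -> | bM] //.
- by have /andP [/negPf -> /negPf ->] := disj b bM.
- rewrite [a.1 == _]eq_sym [a.2 == _]eq_sym.
  by have /andP [/negPf -> /negPf ->] := disj a aM.
- exact: matchM.
Qed.

End Matching.

Section PrefixPermutations.
Variable n : nat.
Implicit Types (k j : nat) (s pi : {perm 'I_n}).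
Local Open Scope group_scope.

Definition prefix k : {set 'I_n} := [set j : 'I_n | (j < k)%N].

Lemma card_prefix k : (k <= n)%N -> #|prefix k| = k.
Proof.
move=> kn; rewrite -sum1_card (eq_bigl (fun j : 'I_n => (j < k)%N)) => [|j].
  by rewrite (big_ord_narrow kn) sum1_card card_ord.
by rewrite inE.
Qed.

Lemma prefix_perm_fix s k (j : 'I_n) :
  s \in Sym (prefix k) -> (k <= j)%N -> s j = j.
Proof. by rewrite inE => son kj; apply: out_perm son _; rewrite inE -leqNgt. Qed.

Lemma prefix_permW s k j :
  (k <= j)%N -> s \in Sym (prefix k) -> s \in Sym (prefix j).
Proof.
move=> kj; rewrite !inE => /subset_trans; apply; apply/subsetP => x.
by rewrite !inE => /leq_trans; apply.
Qed.

Lemma arrivedE pi j : arrived pi j = pi @: prefix j.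
Proof. by []. Qed.

Lemma arrived_prefix_perm s pi k j : s \in Sym (prefix k) -> (k <= j)%N ->
  arrived (s * pi) j = arrived pi j.
Proof.
move=> sk kj; have := prefix_permW kj sk; rewrite inE => /im_perm_on sj.
rewrite !arrivedE -[in RHS]sj -imset_comp.
by apply: eq_imset => x; rewrite permM.
Qed.

Lemma prefix_permS s (k : 'I_n) :
  (s \in Sym (prefix k.+1)) && (s k == k) = (s \in Sym (prefix k)).
Proof.
apply/andP/idP => [[sk1 /eqP skk]|sk]; last first.
  by rewrite (prefix_permW _ sk) // (prefix_perm_fix sk).
rewrite inE; apply/subsetP => x; rewrite inE => sx.
move: sk1; rewrite inE => /subsetP/(_ x sx).
rewrite !inE ltnS leq_eqVlt => /orP [/eqP xk|] //.
by move: sx; rewrite (_ : x = k) ?skk ?eqxx //; apply: val_inj.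
Qed.

Lemma tperm_prefix (t k : 'I_n) :
  t \in prefix k.+1 -> tperm t k \in Sym (prefix k.+1).
Proof.
rewrite !inE => tk; apply: subset_trans (tperm_on t k) _.
by apply/subsetP => x; rewrite !inE => /orP [] /eqP ->.
Qed.

(* Right cosets of Sym (prefix k) in Sym (prefix k.+1), indexed by the image of k. *)
Lemma sum_prefix_permS (k : 'I_n) pi (F : {perm 'I_n} -> nat) :
  \sum_(s in Sym (prefix k.+1)) F (s * pi)%g =
  \sum_(t in prefix k.+1) \sum_(s in Sym (prefix k)) F (s * (tperm t k * pi))%g.
Proof.
rewrite (partition_big (fun s => s k) (fun t => t \in prefix k.+1)) => [|s].
  2: by rewrite inE => /perm_closed ->; rewrite inE.
apply: eq_bigr => t tk; have tauG := tperm_prefix tk.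
rewrite (reindex (fun s => s * tperm t k)); last first.
  by exists (fun s => s * tperm t k) => s _; rewrite -mulgA tperm2 mulg1.
apply: eq_big => [s|s _]; last by rewrite mulgA.
rewrite groupMr // permM -[X in _ == X](tpermR t k) (inj_eq perm_inj).
exact: prefix_permS.
Qed.

End PrefixPermutations.

Arguments prefix {n} k.

Section Algorithm.
Variables (n : nat) (R : finType) (A : {set 'I_n} -> {set 'I_n * R}).
Hypothesis matchingA : forall S, is_matching (A S).
Implicit Types (k m : nat) (s pi : {perm 'I_n}) (r : R).
Local Open Scope group_scope.

Let u := uphalf n.

Definition claimed_at pi m r : bool :=
  (u <= m.+1)%N && (if tent A pi m is Some f then f.2 == r else false).

Definition unclaimed pi k r : bool := all (fun m => ~~ claimed_at pi m r) (iota 0 k).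

Lemma tentP pi m e : tent A pi m = Some e ->
  e \in A (arrived pi m.+1) /\ exists2 x : 'I_n, val x = m & e.1 = pi x.
Proof.
rewrite /tent; case: pickP => // f /andP [fA /imsetP [x]].
by rewrite inE => /eqP xm f1 [<-]; split => //; exists x.
Qed.

Lemma tent_prefix_perm s pi k m : s \in Sym (prefix k) -> (k <= m)%N ->
  tent A (s * pi) m = tent A pi m.
Proof.
move=> sk km; rewrite /tent (arrived_prefix_perm _ sk (leqW km)).
suff -> : [set (s * pi) i | i : 'I_n & val i == m] =
          [set pi i | i : 'I_n & val i == m] by [].
apply: eq_in_imset => x; rewrite inE => /eqP xm.
by rewrite permM (prefix_perm_fix sk) // xm.
Qed.

Lemma claimed_at_prefix_perm s pi k m r : s \in Sym (prefix k) -> (k <= m)%N ->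
  claimed_at (s * pi) m r = claimed_at pi m r.
Proof. by move=> sk km; rewrite /claimed_at (tent_prefix_perm _ sk km). Qed.

Lemma tent_after_prefix_perm s pi i : s \in Sym (prefix i.+1) ->
  tent_after A (s * pi) i = tent_after A pi i.
Proof.
move=> si; apply/setP => e; rewrite !inE; apply: eq_existsb => j.
by case: ltnP => //= ij; rewrite (tent_prefix_perm _ si ij).
Qed.

Lemma accepted_matching pi k : is_matching (accepted A pi k).
Proof.
elim: k => [|k IH] /=; first by apply/is_matchingP => e f; rewrite inE.
by case: ifP => // _; case: (tent A pi k) => // e; case: ifP.
Qed.

Lemma accepted_tent pi k f : f \in accepted A pi k ->
  exists m, [/\ (m < k)%N, (u <= m.+1)%N & tent A pi m = Some f].
Proof.
elim: k => [|k IH]; first by rewrite inE.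
have old : f \in accepted A pi k ->
    exists m, [/\ (m < k.+1)%N, (u <= m.+1)%N & tent A pi m = Some f].
  by case/IH => m [mk um fm]; exists m; split => //; apply: ltnW.
rewrite /=; case: ifP => // uk; case ek: (tent A pi k) => [e|] //; case: ifP => // _.
by rewrite in_setU1 => /orP [/eqP -> | /old] //; exists k.
Qed.

Lemma feasible_unclaimed pi i e : tent A pi i = Some e -> unclaimed pi i e.2 ->
  feasible A pi i.
Proof.
move=> ei /allP free; rewrite /feasible ei.
apply: is_matching_setU1 (accepted_matching pi i) _.
move=> f /accepted_tent [m [mi um fm]].
have [_ [x xi e1]] := tentP ei; have [_ [y ym f1]] := tentP fm.
have : ~~ claimed_at pi m e.2 by apply: free; rewrite mem_iota.
rewrite /claimed_at um fm /= eq_sym => -> /=.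
rewrite andbT e1 f1 (inj_eq perm_inj); apply: contraTneq mi => xy.
by rewrite -ym -xy xi ltnn.
Qed.

Lemma unclaimedS pi k r :
  unclaimed pi k.+1 r = ~~ claimed_at pi k r && unclaimed pi k r.
Proof. by rewrite /unclaimed -addn1 iotaD all_cat /= andbT andbC. Qed.

Lemma unclaimed_early pi k r : (k < u)%N -> unclaimed pi k r.
Proof.
move=> ku; apply/allP => m; rewrite mem_iota /claimed_at => /andP [_ mk].
by rewrite leqNgt (leq_ltn_trans mk ku).
Qed.

Lemma claimed_at_tperm_le1 pi (k : 'I_n) r :
  (#|[set t in prefix k.+1 | claimed_at (tperm t k * pi) k r]| <= 1)%N.
Proof.
have claimedE (t : 'I_n) : (t < k.+1)%N -> claimed_at (tperm t k * pi) k r ->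
    exists2 f, f \in A (arrived pi k.+1) & f = (pi t, r).
  move=> tk; have {}tk : t \in prefix k.+1 by rewrite inE.
  rewrite /claimed_at; case ef: tent => [f|] /andP [_ // /eqP fr].
  have [fA [x xk f1]] := tentP ef; exists f.
    by rewrite -(arrived_prefix_perm _ (tperm_prefix tk) (leqnn _)).
  rewrite [f]surjective_pairing f1 fr permM (_ : x = k) ?tpermR //.
  exact: val_inj.
apply/card_le1_eqP => t1 t2; rewrite !inE => /andP [t1k c1] /andP [t2k c2].
have [f1 f1A f1E] := claimedE t1 t1k c1; have [f2 f2A f2E] := claimedE t2 t2k c2.
have : f1 = f2.
  move/is_matchingP: (matchingA (arrived pi k.+1)); apply => //.
  by rewrite f1E f2E eqxx orbT.
by rewrite f1E f2E => -[/perm_inj ->].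
Qed.

Lemma count_unclaimed_tperm pi (k : 'I_n) r :
  (k <= \sum_(t in prefix k.+1) ~~ claimed_at (tperm t k * pi) k r)%N.
Proof.
have total : \sum_(t in prefix k.+1) ~~ claimed_at (tperm t k * pi) k r
           + \sum_(t in prefix k.+1) claimed_at (tperm t k * pi) k r = k.+1.
  rewrite -big_split -[RHS](card_prefix (ltn_ord k)) -sum1_card /=.
  by apply: eq_bigr => t _; case: claimed_at.
have := claimed_at_tperm_le1 pi k r; rewrite -sum_nat_of_bool; lia.
Qed.

Lemma sum_unclaimedS (k : 'I_n) pi r :
  \sum_(s in Sym (prefix k.+1)) unclaimed (s * pi) k.+1 r =
  \sum_(t in prefix k.+1) ~~ claimed_at (tperm t k * pi) k r *
     \sum_(s in Sym (prefix k)) unclaimed (s * (tperm t k * pi)) k r.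
Proof.
rewrite (sum_prefix_permS k pi (fun q => unclaimed q k.+1 r)).
apply: eq_bigr => t _; rewrite big_distrr /=; apply: eq_bigr => s sk.
by rewrite unclaimedS (claimed_at_prefix_perm _ _ sk) // mulnb.
Qed.

Lemma unclaimed_count k pi r : (k <= n)%N -> (u - 1 <= k)%N ->
  ((u - 1) * k`! <= (\sum_(s in Sym (prefix k)) unclaimed (s * pi) k r) * k)%N.
Proof.
elim: k pi => [|k IH] pi kn uk; first by move: uk; rewrite leqn0 => /eqP ->.
have [ku | uk'] := ltnP k.+1 u.
  rewrite (eq_bigr (fun _ => 1%N)) => [|s _]; last by rewrite unclaimed_early.
  by rewrite sum1_card card_Sym card_prefix // mulnC leq_mul2l uk orbT.
pose kk := Ordinal kn; rewrite (sum_unclaimedS kk) factS mulnCA mulnC leq_mul2r.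
apply/orP; right; have [k0 | k_gt0] := posnP k.
  by rewrite (_ : u - 1 = 0)%N //; lia.
rewrite -(leq_pmul2r k_gt0) big_distrl /=.
apply: leq_trans (_ : \sum_(t in prefix k.+1)
    ~~ claimed_at (tperm t kk * pi) k r * ((u - 1) * k`!) <= _)%N.
  rewrite -big_distrl /= mulnC leq_mul2r; apply/orP; right.
  exact: (count_unclaimed_tperm pi kk r).
apply: leq_sum => t _; rewrite -mulnA leq_mul2l; apply/orP; right.
by apply: IH; [apply: ltnW | rewrite leq_subLR].
Qed.

Lemma feasible_count pi (i : 'I_n) : (u <= i.+1)%N ->
  ((u - 1) * \sum_(s in Sym (prefix i.+1)) (tent A (s * pi) i != None)
    <= (\sum_(s in Sym (prefix i.+1)) feasible A (s * pi) i) * i)%N.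
Proof.
move=> ui; rewrite (sum_prefix_permS i pi (fun q => tent A q i != None)).
rewrite (sum_prefix_permS i pi (fun q => feasible A q i)) big_distrr big_distrl /=.
apply: leq_sum => t _; set q := tperm t i * pi.
rewrite (eq_bigr (fun _ => (tent A q i != None : nat))) => [|s si]; last first.
  by rewrite (tent_prefix_perm _ si).
case eq: (tent A q i) => [e|] /=; last by rewrite big1 ?muln0.
rewrite sum1_card card_Sym card_prefix; last exact: ltnW.
apply: leq_trans (unclaimed_count q e.2 (ltnW (ltn_ord i)) _) _.
  by rewrite leq_subLR.
rewrite leq_mul2r; apply/orP; right; apply: leq_sum => s si.
case: (boolP (unclaimed _ _ _)) => // free; rewrite (feasible_unclaimed _ free) //.
by rewrite (tent_prefix_perm _ si).
Qed.

End Algorithm.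

Lemma sum_translate_stable (gT : finGroupType) (K X : {set gT}) (F : gT -> nat) :
  (forall s x, s \in K -> ((s * x)%g \in X) = (x \in X)) ->
  \sum_(x in X) \sum_(s in K) F (s * x)%g = (#|K| * \sum_(x in X) F x)%N.
Proof.
move=> stableX; rewrite exchange_big /= -sum_nat_const; apply: eq_bigr => s sK.
by rewrite [RHS](reindex_inj (mulgI s)); apply: eq_bigl => x; rewrite stableX.
Qed.

Local Open Scope ring_scope.

Lemma half_sub1_le_uphalf (F : realFieldType) n :
  n%:R / 2 - 1 <= (uphalf n - 1)%:R :> F.
Proof.
have n_le : (n <= (uphalf n).*2)%N.
  by rewrite uphalf_half; have := odd_double_half n; lia.
have [u0 | u_gt0] := posnP (uphalf n).
  by move: n_le; rewrite u0 leqn0 => /eqP ->; rewrite mul0r sub0r oppr_le0.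
rewrite natrB // lerBlDr subrK ler_pdivrMr ?ltr0n //.
by rewrite -natrM ler_nat muln2.
Qed.

Lemma half_sub1_div_le (F : realFieldType) (n i c f : nat) : (0 < c)%N ->
  ((uphalf n - 1) * c <= f * i)%N -> (n%:R / 2 - 1) / i%:R <= f%:R / c%:R :> F.
Proof.
move=> c_gt0 ucfi.
apply: le_trans (_ : (uphalf n - 1)%:R / i%:R <= _).
  by rewrite ler_wpM2r ?invr_ge0 ?half_sub1_le_uphalf.
have [-> | i_gt0] := posnP i; first by rewrite invr0 mulr0 divr_ge0.
by rewrite ler_pdivrMr ?ltr0n // mulrAC ler_pdivlMr ?ltr0n // -!natrM ler_nat.
Qed.

Theorem mainTheorem12 (n : nat) (R : finType)
  (E : {set 'I_n * R}) (A : {set 'I_n} -> {set 'I_n * R})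
  (hAE : forall S, A S \subset E)
  (hAS : forall S, {in A S, forall e, e.1 \in S})
  (hAM : forall S, is_matching (A S))
  (i : 'I_n) (hi : (uphalf n <= i.+1)%N)
  (Sl : {set 'I_n}) (T : {set 'I_n * R}) :
  let cond := [set pi : {perm 'I_n} |
                 [&& arrived pi i.+1 == Sl, tent_after A pi i == T
                   & tent A pi i != None]] in
  (0 < #|cond|)%N ->
  ((n%:R / 2 - 1) / i%:R : rat)
    <= #|[set pi in cond | feasible A pi i]|%:R / #|cond|%:R.
Proof.
move=> cond cond_gt0; apply: half_sub1_div_le => //.
pose X := [set pi : {perm 'I_n} |
             (arrived pi i.+1 == Sl) && (tent_after A pi i == T)].
have stableX s pi : s \in Sym (prefix i.+1) -> ((s * pi)%g \in X) = (pi \in X).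
  by move=> si; rewrite !inE (arrived_prefix_perm _ si) // tent_after_prefix_perm.
have -> : #|cond| = (\sum_(pi in X) (tent A pi i != None))%N.
  by rewrite sum_nat_of_bool; apply: eq_card => pi; rewrite !inE andbA.
have -> : #|[set pi in cond | feasible A pi i]| =
          (\sum_(pi in X) feasible A pi i)%N.
  rewrite sum_nat_of_bool; apply: eq_card => pi; rewrite !inE -!andbA.
  by rewrite /feasible; case: tent => [e|] /=; rewrite ?andbF.
have Sym_gt0 : (0 < #|Sym (prefix i.+1 : {set 'I_n})|)%N.
  by rewrite card_Sym fact_gt0.
rewrite -(leq_pmul2l Sym_gt0) mulnCA.
rewrite -(sum_translate_stable (fun pi => tent A pi i != None) stableX) mulnA.
rewrite -(sum_translate_stable (fun pi => feasible A pi i) stableX).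
by rewrite big_distrr big_distrl; apply: leq_sum => pi _; apply: feasible_count.
Qed.
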